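(* Let $A=H+S\in\mathbb{C}^{n,n}$ with $H=H^*\neq 0$ positive semidefinite and $S=-S^*\neq 0$. Let $U\in\mathbb{C}^{n,n}$ be unitary, $r\geq 2$, and $n_1\geq\cdots\geq n_{r-1}>0$, $n_r\geq 0$ with $\sum n_i=n$, such that $U^*HU=\mathrm{diag}(H_{11},0)$ with $H_{11}=H_{11}^*\in\mathbb{C}^{n_1,n_1}$ positive definite, and $U^*SU=[S_{ij}]_{i,j=1}^r$ (blocks $S_{ij}\in\mathbb{C}^{n_i,n_j}$) with $S_{ij}=0$ for $|i-j|>1$, $S_{i,r}=S_{r,i}=0$ for $i<r$, $S_{ii}=-S_{ii}^*$, and $S_{i,i-1}=-S_{i-1,i}^*=[\Sigma_{i,i-1}\;\,0]$ with $\Sigma_{i,i-1}\in\mathbb{C}^{n_i,n_i}$ nonsingular for $i=2,\dots,r-1$. Set $\widehat{A}_{11}=H_{11}+S_{11}$ and $\mathcal{S}_0:=\widehat{A}_{11}$, and define recursively $\mathcal{S}_k=S_{k+1,k+1}-S_{k+1,k}\,\mathcal{S}_{k-1}^{-1}\,S_{k,k+1}$ for $k=1,\dots,r-2$. Then all these inverses exist, $\widehat{A}_{11}$ and the Schur complements $\mathcal{S}_1,\dots,\mathcal{S}_{r-2}$ are positive definite, and $U^*AU$ is transformed via this block Gaussian elimination (Schur complement reduction), i.e. $U^*AU=L\,D\,W$ with $L$ block unit lower triangular and $W$ block unit upper triangular, into the block diagonal form $$D=\mathrm{diag}\big(\widehat{A}_{11},\mathcal{S}_1,\dots,\mathcal{S}_{r-2},S_{r,r}\big),$$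 where the skew-Hermitian block $S_{r,r}$ is absent if $n_r=0$.
   Context: A (not necessarily Hermitian) matrix $M\in\mathbb{C}^{m,m}$ is called positive definite (resp. positive semidefinite) if its Hermitian part $\frac12(M+M^* )$ is positive definite (resp. positive semidefinite). $M^*$ denotes the conjugate transpose. *)

(* Complex numbers are modelled by an arbitrary
   numClosedFieldType C (e.g. C := R[i] or algC); conjugation is Num.conj. *)
From HB Require Import structures.
From mathcomp Require Import all_boot all_order all_algebra.
Set Implicit Arguments.
Unset Strict Implicit.
Unset Printing Implicit Defensive.
Import Order.TTheory GRing.Theory Num.Theory.
Local Open Scope ring_scope.

Section Defs.
Variable C : numClosedFieldType.

Definition adjmx m n (M : 'M[C]_(m, n)) : 'M[C]_(n, m) := (map_mx Num.conj M)^T.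

Definition is_herm n (M : 'M[C]_n) : Prop := adjmx M = M.
Definition is_skewherm n (M : 'M[C]_n) : Prop := adjmx M = - M.

Definition herm_part n (M : 'M[C]_n) : 'M[C]_n := 2^-1 *: (M + adjmx M).

(* Hermitian positive (semi)definiteness of a Hermitian matrix K:
   v^* K v > 0 (resp. >= 0) for all v <> 0; in a numClosedFieldType,
   0 < z means z is real and positive. *)
Definition herm_posdef n (K : 'M[C]_n) : Prop :=
  is_herm K /\ forall v : 'cV[C]_n, v != 0 -> 0 < (adjmx v *m K *m v) 0 0.
Definition herm_possemidef n (K : 'M[C]_n) : Prop :=
  is_herm K /\ forall v : 'cV[C]_n, 0 <= (adjmx v *m K *m v) 0 0.

(* positive (semi)definite in the paper's sense (possibly non-Hermitian M):
   its Hermitian part is positive (semi)definite *)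
Definition posdef n (M : 'M[C]_n) : Prop := herm_posdef (herm_part M).
Definition possemidef n (M : 'M[C]_n) : Prop := herm_possemidef (herm_part M).

Definition cunitary n (U : 'M[C]_n) : Prop := adjmx U *m U = 1%:M.
End Defs.

(* Adding a skew-Hermitian matrix does not change the Hermitian part, so
   S_0 = H_11 + S_11 is positive definite.  Write X := S_{k+1,k} = [Sigma 0],
   which has full row rank.  Since S_{k,k+1} = -X^*, the Schur complement is
   S_k = S_{k+1,k+1} + X S_{k-1}^{-1} X^*, whose Hermitian part is
   X (Hermitian part of S_{k-1}^{-1}) X^*; and the inverse of a positive definite
   matrix is positive definite.  So by induction every pivot is positive definite,
   hence invertible.  Because H only lives in the (1,1) block, U^* A U is block
   tridiagonal, and block Gaussian elimination factors it as L D W with block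
   bidiagonal L and W.  The last pivot is S_{r,r} itself because S_{r,r-1} = 0. *)

From HB Require Import structures.
From mathcomp Require Import all_boot all_order all_algebra zify.
Import Order.TTheory GRing.Theory Num.Theory.
Local Open Scope ring_scope.
Set Implicit Arguments.
Unset Strict Implicit.
Unset Printing Implicit Defensive.

Section ConjTranspose.
Variable C : numClosedFieldType.

Lemma adjmxK m n (M : 'M[C]_(m, n)) : adjmx (adjmx M) = M.
Proof. by apply/matrixP=> i j; rewrite !mxE conjCK. Qed.

Lemma adjmxM m n k (A : 'M[C]_(m, n)) (B : 'M_(n, k)) :
  adjmx (A *m B) = adjmx B *m adjmx A.
Proof. by rewrite /adjmx map_mxM trmx_mul. Qed.

Lemma adjmxD m n (A B : 'M[C]_(m, n)) : adjmx (A + B) = adjmx A + adjmx B.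
Proof. by rewrite /adjmx map_mxD linearD. Qed.

Lemma adjmxN m n (A : 'M[C]_(m, n)) : adjmx (- A) = - adjmx A.
Proof. by rewrite /adjmx map_mxN linearN. Qed.

Lemma adjmx1 n : adjmx (1%:M : 'M[C]_n) = 1%:M.
Proof. by rewrite /adjmx map_mx1 trmx1. Qed.

Lemma adjmx_eq0 m n (A : 'M[C]_(m, n)) : (adjmx A == 0) = (A == 0).
Proof. by rewrite /adjmx trmx_eq0 map_mx_eq0. Qed.

End ConjTranspose.

Section PositiveDefinite.
Variable C : numClosedFieldType.

Lemma posdefE n (M : 'M[C]_n) : posdef M <->
  forall v : 'cV[C]_n, v != 0 -> 0 < (adjmx v *m (M + adjmx M) *m v) 0 0.
Proof.
have half_quad (v : 'cV[C]_n) (K : 'M_n) :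
    (adjmx v *m (2^-1 *: K) *m v) 0 0 = 2^-1 * (adjmx v *m K *m v) 0 0.
  by rewrite -scalemxAr -scalemxAl mxE.
have half_gt0 : (0 : C) < 2^-1 by rewrite invr_gt0 ltr0n.
rewrite /posdef /herm_posdef /herm_part; split.
  by case=> _ P v /P; rewrite half_quad pmulr_rgt0.
move=> P; split=> [|v /P]; last by rewrite half_quad pmulr_rgt0.
rewrite /is_herm /adjmx map_mxZ linearZ /= -/(adjmx _) adjmxD adjmxK.
by rewrite fmorphV rmorphMn rmorph1 addrC.
Qed.

Lemma posdef_unit n (M : 'M[C]_n) : posdef M -> M \in unitmx.
Proof.
move/posdefE => P; rewrite unitmxE unitfE -det_tr.
apply/negP => /det0P [w nw wM].
have Mv : M *m w^T = 0 by rewrite -[M]trmxK -trmx_mul wM trmx0.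
have /P : w^T != 0 by rewrite -trmx0 (inj_eq trmx_inj).
by rewrite mulmxDr mulmxDl -!mulmxA Mv mulmxA -adjmxM Mv /adjmx map_mx0 trmx0
  mulmx0 mul0mx addr0 mxE ltxx.
Qed.

Lemma posdef_invmx n (M : 'M[C]_n) : posdef M -> posdef (invmx M).
Proof.
move=> PM; have UM := posdef_unit PM; apply/posdefE => u.
have -> : u = M *m (invmx M *m u) by rewrite mulmxA mulmxV // mul1mx.
move: (invmx M *m u) => w Mw_neq0.
have w_neq0 : w != 0 by apply: contraNneq Mw_neq0 => ->; rewrite mulmx0.
have -> : adjmx (M *m w) *m (invmx M + adjmx (invmx M)) *m (M *m w)
    = adjmx w *m (adjmx M + M) *m w.
  rewrite adjmxM mulmxDr mulmxDl -!mulmxA mulKmx // (mulmxA (adjmx M)).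
  by rewrite -adjmxM mulVmx // adjmx1 mul1mx -mulmxDr -mulmxDl.
by move/posdefE: PM => /(_ w w_neq0); rewrite addrC.
Qed.

Lemma posdef_addl_skew n (K M : 'M[C]_n) :
  is_skewherm K -> posdef M -> posdef (K + M).
Proof.
move=> skK /posdefE PM; apply/posdefE => v /PM.
by rewrite adjmxD skK addrACA subrr add0r.
Qed.

Lemma posdef_congr m n (N : 'M[C]_n) (X : 'M[C]_(m, n)) :
  posdef N -> row_free X -> posdef (X *m N *m adjmx X).
Proof.
move=> /posdefE PN freeX; apply/posdefE => v v_neq0.
have Xv_neq0 : adjmx X *m v != 0.
  by rewrite -adjmx_eq0 adjmxM adjmxK mulmx_free_eq0 // adjmx_eq0.
rewrite !adjmxM adjmxK -[X *m N *m _]mulmxA -mulmxDr -mulmxDl.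
have -> : forall K : 'M_n, adjmx v *m (X *m (K *m adjmx X)) *m v
    = adjmx (adjmx X *m v) *m K *m (adjmx X *m v).
  by move=> K; rewrite adjmxM adjmxK !mulmxA.
exact: PN.
Qed.

Lemma posdef_schur_skew m n (K : 'M[C]_m) (X : 'M[C]_(m, n)) (M : 'M[C]_n) :
  is_skewherm K -> row_free X -> posdef M ->
  posdef (K - X *m invmx M *m - adjmx X).
Proof.
move=> skK freeX PM; rewrite mulmxN opprK.
by apply: posdef_addl_skew => //; apply: posdef_congr => //; apply: posdef_invmx.
Qed.

End PositiveDefinite.

Lemma row_free_unit_lcols (F : fieldType) m n (X : 'M[F]_(m, n)) (Sig : 'M[F]_m) :
  (m <= n)%N -> Sig \in unitmx ->
  (forall (i : 'I_m) (j : 'I_n) (lt_jm : (j < m)%N), X i j = Sig i (Ordinal lt_jm)) ->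
  row_free X.
Proof.
move=> le_mn uSig XE; have XpidE : X *m pid_mx m = Sig.
  apply/matrixP => i k; rewrite mxE (bigD1 (widen_ord le_mn k)) //= big1 => [|j].
    rewrite !mxE /= eqxx ltn_ord mulr1 addr0 (XE i (widen_ord le_mn k) (ltn_ord k)).
    by congr (Sig i _); apply: val_inj.
  by rewrite /pid_mx mxE -val_eqE /= => /negbTE->; rewrite mulr0.
by rewrite -row_leq_rank -{1}(mxrank_unit uSig) -XpidE mxrankM_maxl.
Qed.

Section BlockTridiagonalLDU.
Variables (R : comUnitRingType) (r : nat) (p : 'I_r -> nat).
Variables (B : forall i j : 'I_r, 'M[R]_(p i, p j)) (D : forall i : 'I_r, 'M[R]_(p i)).

Hypothesis B_tridiag : forall i j : 'I_r, (i.+1 < j)%N \/ (j.+1 < i)%N -> B i j = 0.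
Hypothesis D_unit : forall i : 'I_r, (i.+1 < r)%N -> D i \in unitmx.
Hypothesis D_first : forall i : 'I_r, i = 0%N :> nat -> D i = B i i.
Hypothesis D_schur : forall i j : 'I_r, i = j.+1 :> nat ->
  D i = B i i - B i j *m invmx (D j) *m B j i.

(* [pid_mx (p i)] plays the identity block: [1%:M] is not well typed at
   ['M_(p i, p j)] even when [i == j]. *)
Definition ldu_lower i j : 'M[R]_(p i, p j) :=
  if i == j then pid_mx (p i)
  else if i == j.+1 :> nat then B i j *m invmx (D j) else 0.

Definition ldu_upper i j : 'M[R]_(p i, p j) :=
  if i == j then pid_mx (p i)
  else if j == i.+1 :> nat then invmx (D i) *m B i j else 0.

Lemma ldu_lower_diag (i : 'I_r) : ldu_lower i i = 1%:M.
Proof. by rewrite /ldu_lower eqxx pid_mx_1. Qed.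

Lemma ldu_upper_diag (i : 'I_r) : ldu_upper i i = 1%:M.
Proof. by rewrite /ldu_upper eqxx pid_mx_1. Qed.

Lemma ldu_lower_upper (i j : 'I_r) : (i < j)%N -> ldu_lower i j = 0.
Proof. by move=> lt_ij; rewrite /ldu_lower -val_eqE /= !ifN //; lia. Qed.

Lemma ldu_upper_lower (i j : 'I_r) : (j < i)%N -> ldu_upper i j = 0.
Proof. by move=> lt_ji; rewrite /ldu_upper -val_eqE /= !ifN //; lia. Qed.

Lemma ldu_row_sum (i k : 'I_r) :
  \sum_j ldu_lower i j *m D j *m ldu_upper j k =
  D i *m ldu_upper i k + \sum_(j : 'I_r | i == j.+1 :> nat) B i j *m ldu_upper j k.
Proof.
rewrite (bigD1 i) //= ldu_lower_diag mul1mx; congr (_ + _).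
rewrite big_mkcond [RHS]big_mkcond; apply: eq_bigr => j _ /=.
rewrite /ldu_lower eq_sym; case: eqVneq => [->|_] /=; first by rewrite ifN //; lia.
case: ifP => [/eqP ij|_]; last by rewrite !mul0mx.
by rewrite mulmxKV // D_unit // -ij.
Qed.

Lemma ldu_upper_succ (i k : 'I_r) :
  k = i.+1 :> nat -> ldu_upper i k = invmx (D i) *m B i k.
Proof. by move=> ki; rewrite /ldu_upper ki eqxx ifN // -val_eqE /= ki; lia. Qed.

Lemma ldu_upper_eq0 (i k : 'I_r) :
  (k < i)%N \/ (i.+1 < k)%N -> ldu_upper i k = 0.
Proof. by move=> far; rewrite /ldu_upper -val_eqE /= !ifN //; lia. Qed.

Lemma block_tridiag_ldu :
  \mxblock_(i, j) B i j =
  \mxblock_(i, j) ldu_lower i j *m \mxdiag_i D i *m \mxblock_(i, j) ldu_upper i j.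
Proof.
rewrite mul_mxblock_mxdiag mul_mxblock; apply/eq_mxblock => i k; rewrite ldu_row_sum.
have [i0 | [j ij]] : i = 0%N :> nat \/ exists j : 'I_r, i = j.+1 :> nat.
  by case: i => [[|i] lt_ir]; [left | right; exists (Ordinal (ltnW lt_ir))].
- rewrite big_pred0 ?addr0 => [|j]; last by rewrite i0.
  have [<-|] := eqVneq i k; first by rewrite ldu_upper_diag mulmx1 D_first.
  rewrite -val_eqE /= => ne_ik.
  have [ki|ne_ki] := eqVneq (k : nat) i.+1.
    by rewrite ldu_upper_succ // mulKVmx // D_unit // -ki.
  by rewrite ldu_upper_eq0 ?mulmx0 ?B_tridiag //; lia.
- rewrite (big_pred1 j) => [|l]; last by rewrite ij eqSS val_eqE eq_sym.
  have [<-|] := eqVneq i k.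
    by rewrite ldu_upper_diag mulmx1 ldu_upper_succ // (D_schur ij) mulmxA subrK.
  rewrite -val_eqE /= => ne_ik.
  have [ki|ne_ki] := eqVneq (k : nat) i.+1.
    rewrite ldu_upper_succ // mulKVmx ?D_unit -?ki //.
    by rewrite ldu_upper_eq0 ?mulmx0 ?addr0 //; lia.
  have [kj|ne_kj] := eqVneq k j.
    by rewrite -kj ldu_upper_diag mulmx1 ldu_upper_eq0 ?mulmx0 ?add0r //; lia.
  move: ne_kj; rewrite -val_eqE /= => ne_kj.
  by rewrite !ldu_upper_eq0 ?mulmx0 ?addr0 ?B_tridiag //; lia.
Qed.

End BlockTridiagonalLDU.

Theorem lemma4p2 (C : numClosedFieldType) (r : nat) (p : 'I_r -> nat)
  (A H S U : 'M[C]_(\sum_(i < r) p i))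
  (Hb Sb : forall i j : 'I_r, 'M[C]_(p i, p j))
  (Sc : forall k : 'I_r, 'M[C]_(p k)) :
  (* r >= 2, n_1 >= ... >= n_{r-1} > 0, n_r >= 0, n = sum n_i *)
  (2 <= r)%N ->
  (forall i j : 'I_r, (i <= j)%N -> (j.+1 < r)%N -> (p j <= p i)%N) ->
  (forall i : 'I_r, (i.+1 < r)%N -> (0 < p i)%N) ->
  (* A = H + S, H = H^* <> 0 psd, S = -S^* <> 0 *)
  A = H + S ->
  is_herm H -> H != 0 -> possemidef H ->
  is_skewherm S -> S != 0 ->
  cunitary U ->
  (* U^* H U = diag(H11, 0), H11 Hermitian positive definite *)
  adjmx U *m H *m U = \mxblock_(i, j) Hb i j ->
  (forall i j : 'I_r, ~ (i = 0%N :> nat /\ j = 0%N :> nat) -> Hb i j = 0) ->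
  (forall i : 'I_r, i = 0%N :> nat -> is_herm (Hb i i) /\ posdef (Hb i i)) ->
  (* block structure of U^* S U *)
  adjmx U *m S *m U = \mxblock_(i, j) Sb i j ->
  (forall i j : 'I_r, (i.+1 < j)%N \/ (j.+1 < i)%N -> Sb i j = 0) ->
  (forall i j : 'I_r, j = r.-1 :> nat -> (i < j)%N -> Sb i j = 0 /\ Sb j i = 0) ->
  (forall i : 'I_r, is_skewherm (Sb i i)) ->
  (forall i j : 'I_r, i = j.+1 :> nat -> (i.+1 < r)%N ->
     Sb i j = - adjmx (Sb j i) /\
     exists Sig : 'M[C]_(p i),
       Sig \in unitmx /\
       (forall (a : 'I_(p i)) (b : 'I_(p j)) (hb : (b < p i)%N),
          Sb i j a b = Sig a (Ordinal hb)) /\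
       (forall (a : 'I_(p i)) (b : 'I_(p j)), (p i <= b)%N -> Sb i j a b = 0)) ->
  (* recursive definition of the Schur complements S_0 = A11hat, S_1, ... *)
  (forall k : 'I_r, k = 0%N :> nat -> Sc k = Hb k k + Sb k k) ->
  (forall k j : 'I_r, k = j.+1 :> nat -> (k.+1 < r)%N ->
     Sc k = Sb k k - Sb k j *m invmx (Sc j) *m Sb j k) ->
  (* conclusions *)
  (forall k : 'I_r, (k.+1 < r)%N -> Sc k \in unitmx /\ posdef (Sc k)) /\
  exists Lb Wb : forall i j : 'I_r, 'M[C]_(p i, p j),
    (forall i : 'I_r, Lb i i = 1%:M) /\
    (forall i j : 'I_r, (i < j)%N -> Lb i j = 0) /\
    (forall i : 'I_r, Wb i i = 1%:M) /\
    (forall i j : 'I_r, (j < i)%N -> Wb i j = 0) /\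
    adjmx U *m A *m U =
      \mxblock_(i, j) Lb i j
      *m \mxdiag_(i < r) (if (i.+1 < r)%N then Sc i else Sb i i)
      *m \mxblock_(i, j) Wb i j.
Proof.
move=> r2 pdec _ eA _ _ _ _ _ _ eH Hz Hpd eS Sz Slast Sskew Ssub Sc0 ScS.
have Sc_posdef m (k : 'I_r) : k = m :> nat -> (k.+1 < r)%N -> posdef (Sc k).
  elim: m k => [|m IH] k km kr.
    rewrite Sc0 // addrC; apply: posdef_addl_skew => //.
    by have [] := Hpd k km.
  have lt_mr : (m < r)%N by lia.
  set j := Ordinal lt_mr.
  have [SkjE [Sig [uSig [SkjSig _]]]] := Ssub k j km kr.
  have SjkE : Sb j k = - adjmx (Sb k j) by rewrite SkjE adjmxN adjmxK opprK.
  rewrite (ScS k j km kr) SjkE.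
  apply: posdef_schur_skew => //; last by apply: IH => //=; lia.
  by apply: row_free_unit_lcols SkjSig => //; apply: pdec => /=; lia.
have Sc_unit (k : 'I_r) : (k.+1 < r)%N -> Sc k \in unitmx.
  by move=> kr; apply/posdef_unit/(Sc_posdef k).
split=> [k kr|]; first by split; [apply: Sc_unit | apply: (Sc_posdef k)].
pose Bb i j := Hb i j + Sb i j.
pose D (i : 'I_r) := if (i.+1 < r)%N then Sc i else Sb i i.
exists (ldu_lower Bb D), (ldu_upper Bb D).
do 2?split; [exact: ldu_lower_diag | exact: ldu_lower_upper |].
do 2?split; [exact: ldu_upper_diag | exact: ldu_upper_lower |].
rewrite eA mulmxDr mulmxDl eH eS -mxblockD; apply: block_tridiag_ldu.
- by move=> i j far; rewrite /Bb Hz ?Sz ?add0r // => -[i0 j0]; case: far; rewrite i0 j0.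
- by move=> i ir; rewrite /D ir; apply: Sc_unit.
- by move=> i i0; rewrite /D /Bb i0 r2 Sc0.
move=> i j ij; have Hb_i0 l : Hb i l = 0 /\ Hb l i = 0 by split; apply: Hz; lia.
rewrite /Bb /D !(proj1 (Hb_i0 _)) (proj2 (Hb_i0 _)) !add0r -ij ltn_ord.
case: ifP => [ir | /negbT ir]; first exact: ScS.
have lt_ir := ltn_ord i.
by rewrite (proj2 (Slast j i _ _)) ?mul0mx ?subr0 //; lia.
Qed.
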